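(* Let $m_1,m_2\ge3$ be coprime integers, let $n$ be an even integer divisible by $m_1$, and let $Q\in C(n,m_1,m_2)$ with $Ch_1(Q)\ne0$. Then either $Ch_2(Q)=Ch_3(Q)=0$, or $Ch_2(Q)=Ch_4(Q)=Ch_5(Q)=0$.
   Context: $T_k$ denotes the Chebyshev polynomial of the first kind of degree $k$, $T_k(\cos\phi)=\cos(k\phi)$. Every real polynomial $Q$ of degree $n$ can be uniquely written as $Q=\sum_{k=0}^n d_kT_k$ with $d_k\in\mathbb{R}$; set $Ch_i(Q)=d_{n-i}$ for $0\le i\le n$. $C(n,m_1,m_2)$ denotes the set of real polynomials $Q=\sum_{k=0}^n d_kT_k$ with $d_n\ne0$ and such that $d_k=0$ unless $k$ is divisible by $m_1$ or by $m_2$. *)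

From HB Require Import structures.
From mathcomp Require Import all_boot all_order all_algebra.
Set Implicit Arguments. Unset Strict Implicit. Unset Printing Implicit Defensive.
Import Order.TTheory GRing.Theory Num.Theory.
Local Open Scope ring_scope.

(* pair (T_k, T_{k+1}) of Chebyshev polynomials of the first kind *)
Fixpoint cheb_pair (R : nzRingType) (k : nat) : {poly R} * {poly R} :=
  match k with
  | O => (1, 'X)
  | S k' => let: (a, b) := cheb_pair R k' in (b, 2%:R *: 'X * b - a)
  end.

Definition cheb (R : nzRingType) (k : nat) : {poly R} := (cheb_pair R k).1.

Definition cheb_expansion (R : nzRingType) (Q : {poly R}) (n : nat) (d : nat -> R) :=
  Q = \sum_(k < n.+1) d k *: cheb R k.

Definition in_C (R : nzRingType) (n m1 m2 : nat) (Q : {poly R}) (d : nat -> R) :=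
  [/\ cheb_expansion Q n d, d n != 0 &
      forall k, (k <= n)%N -> ~~ (m1 %| k)%N -> ~~ (m2 %| k)%N -> d k = 0].

Definition Ch (R : nzRingType) (n : nat) (d : nat -> R) (i : nat) : R := d (n - i)%N.

From HB Require Import structures.
From mathcomp Require Import all_boot all_order all_algebra.
From mathcomp Require Import zify.
Import Order.TTheory GRing.Theory Num.Theory.
Local Open Scope ring_scope.

(* Only the support condition on the coefficients matters: Ch_i(Q) = d_(n-i) can be
   nonzero only if m1 or m2 divides n - i.  Since m1 | n and Ch_1(Q) <> 0, m2 divides
   n - 1, so m1 | n - i iff m1 | i, and m2 | n - i iff m2 | i - 1.  If m1 >= 4 this
   kills i = 2, 3.  If m1 = 3, coprimality gives m2 <> 3 and the parity of n - 1 gives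
   m2 <> 4, which kills i = 2, 4, 5. *)

Lemma dvdn_sub_shift {a n i j : nat} :
  (j <= i <= n)%N -> (a %| n - j)%N -> (a %| n - i)%N = (a %| i - j)%N.
Proof.
case/andP=> le_ji le_in a_dvd; rewrite -(dvdn_subr _ a_dvd); last lia.
by congr (_ %| _)%N; lia.
Qed.

Lemma Ch_eq0 {R : nzRingType} {n m1 m2 i : nat} {Q : {poly R}} {d : nat -> R} :
  in_C n m1 m2 Q d -> ~~ ((m1 %| n - i) || (m2 %| n - i))%N -> Ch n d i = 0.
Proof. by case=> _ _ d_supp; rewrite negb_or => /andP[]; apply/d_supp/leq_subr. Qed.

Lemma Ch_eq0_shifted {R : nzRingType} {n m1 m2 i : nat} {Q : {poly R}} {d : nat -> R} :
  in_C n m1 m2 Q d -> (m1 %| n)%N -> (m2 %| n - 1)%N -> (0 < i <= n)%N ->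
  ~~ (m1 %| i)%N -> ~~ (m2 %| i.-1)%N -> Ch n d i = 0.
Proof.
move=> QC m1_n m2_n1 i_range m1Ni m2Ni; apply: (Ch_eq0 QC).
rewrite dvdn_subr ?(dvdn_sub_shift _ m2_n1) ?subn1 ?negb_or ?m1Ni //; lia.
Qed.

Theorem corollary3p2 (R : realFieldType) (m1 m2 n : nat) (Q : {poly R}) (d : nat -> R) :
  (3 <= m1)%N -> (3 <= m2)%N -> coprime m1 m2 ->
  ~~ odd n -> (m1 %| n)%N -> (0 < n)%N ->
  in_C n m1 m2 Q d ->
  Ch n d 1 != 0 ->
  (Ch n d 2 = 0 /\ Ch n d 3 = 0) \/ (Ch n d 2 = 0 /\ Ch n d 4 = 0 /\ Ch n d 5 = 0).
Proof.
move=> m1_ge3 m2_ge3 co_m12 n_even m1_n n_gt0 QC Ch1_neq0.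
have m1_le_n : (m1 <= n)%N := dvdn_leq n_gt0 m1_n.
have m2_n1 : (m2 %| n - 1)%N.
  have : ((m1 %| n - 1) || (m2 %| n - 1))%N by apply: contraNT Ch1_neq0 => /(Ch_eq0 QC)->.
  by rewrite dvdn_subr // gtnNdvd //; lia.
have Ch_shifted := Ch_eq0_shifted QC m1_n m2_n1.
have Ch2 : Ch n d 2 = 0 by apply: Ch_shifted; rewrite ?gtnNdvd //; lia.
have [m1_eq3 | m1_neq3] := eqVneq m1 3%N; last first.
  by left; split=> //; apply: Ch_shifted; rewrite ?gtnNdvd //; lia.
subst m1; right; split=> //.
have m2_ge5 : (5 <= m2)%N.
  have m2_neq3 : m2 != 3%N by apply: contraTneq co_m12 => ->.
  have m2_odd : odd m2 by apply: dvdn_odd m2_n1 _; lia.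
  lia.
by split; apply: Ch_shifted => //; rewrite ?gtnNdvd //; lia.
Qed.
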